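(* Let $m$ be a positive integer and $n=m(m+1)/2$. Write $\prod_{i=1}^m(1-X^i)=\sum_{i=0}^n c_iX^i$. Then the matrix $\mathsf P$ with rows indexed by integers $k\ge0$, columns indexed by non-empty subsets $S\subseteq[1,m]$, and $(k,S)$ entry $p(k,S)$, has rank $n$ over $\mathbb{Q}$. Moreover, for all $k\ge n$ and all non-empty $S\subseteq[1,m]$, $$p(k,S)=-\sum_{j=k-n}^{k-1}c_{k-j}\,p(j,S).$$
   Context: For $S\subseteq\mathbb{N}$ and $k\in\mathbb{Z}$, $p(k,S)$ is the number of partitions of $k$ all of whose parts lie in $S$ ($p(0,S)=1$). $[1,m]=\{1,\dots,m\}$. *)

From HB Require Import structures.
From mathcomp Require Import all_boot all_order all_algebra.
Set Implicit Arguments. Unset Strict Implicit. Unset Printing Implicit Defensive.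
Import Order.TTheory GRing.Theory Num.Theory.

(* p(k,S): the number of partitions of k all of whose parts lie in S.
   A partition of k is represented by its nonincreasing list of parts,
   padded with zeros to length exactly k (a partition of k has at most k
   parts, each at most k); this padding is a bijection. *)
Definition p (k : nat) (S : pred nat) : nat :=
  #|[set t : k.-tuple 'I_k.+1 |
      [&& sorted geq (map val t),
          sumn (map val t) == k &
          all (fun x => (x == 0) || S x) (map val t)]]|.

(* the subset of [1,m] (as a set of naturals) encoded by S : {set 'I_m},
   element i : 'I_m standing for the integer i+1 *)
Definition natset (m : nat) (S : {set 'I_m}) : pred nat :=
  fun x => [exists i in S, x == (val i).+1].

Definition nesubsets (m : nat) : {set {set 'I_m}} := [set S | S != set0].

Definition Pmat (m N : nat) : 'M[rat]_(N, #|nesubsets m|) :=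
  \matrix_(i < N, j < #|nesubsets m|)
     ((p i (natset (enum_val j)))%:R : rat).

Definition cpoly (m : nat) : {poly int} :=
  \prod_(i < m) (1 - 'X^(i.+1)).

From HB Require Import structures.
From mathcomp Require Import all_boot all_order all_algebra.
Set Implicit Arguments. Unset Strict Implicit. Unset Printing Implicit Defensive.
Import Order.TTheory GRing.Theory Num.Theory.

(* Write n = m(m+1)/2 = 1 + 2 + ... + m, and for a non-empty S ⊆ [1,m] let
   P_S(X) = Σ_k p(k,S) X^k = ∏_{i∈S} 1/(1 - X^i).
   1. Counting: p(k,S) is computed as a count over an explicit enumeration of
      integer sequences; removing the largest part gives the classical
      recursion for partitions with bounded parts, which says coefficientwise
      that P_S(X)·∏_{i∈S}(1 - X^i) = 1.
   2. Since ∏_{i=1}^m (1 - X^i) = ∏_{i∈S}(1 - X^i)·∏_{i∉S}(1 - X^i), the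
      product of cpoly with P_S is ∏_{i∉S}(1 - X^i), a polynomial of degree
      < n because S ≠ ∅.  Its coefficients of degree k ≥ n vanish, which is
      the recurrence (note c_0 = 1).
   3. Rank ≤ n: by the recurrence each row k ≥ n of P lies in the row space
      of the first n rows.
   4. Rank ≥ n: multiplying the first n rows by the Toeplitz matrix (c_{i-k})
      gives the matrix whose columns are the coefficient vectors of the
      products ∏_{i∈T}(1 - X^i), T a proper subset of [1,m].  These products
      span the polynomials of degree < n (proved dually, by induction on m),
      so that matrix has full row rank n. *)

Fixpoint words (L N : nat) : seq (seq nat) :=
  if L is L'.+1 then flatten [seq [seq x :: s | s <- words L' N] | x <- iota 0 N]
  else [:: [::]].

Lemma count_wordsS L N (P : pred (seq nat)) :
  count P (words L.+1 N) = \sum_(0 <= x < N) count (fun s => P (x :: s)) (words L N).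
Proof.
rewrite /= count_flatten sumnE !big_map /index_iota subn0.
by apply: eq_bigr => x _; rewrite /= count_map.
Qed.

Lemma size_words L N : size (words L N) = N ^ L.
Proof.
elim: L => [|L IH] //; rewrite -count_predT count_wordsS.
under eq_bigr do rewrite count_predT IH.
by rewrite sum_nat_const_nat subn0 expnS.
Qed.

Lemma mem_words L N s : size s = L -> all (fun x => x < N) s -> s \in words L N.
Proof.
elim: L s => [|L IH] [|x s] //= [Hs] /andP[Hx Hall].
apply/flattenP; exists [seq x :: s | s <- words L N].
  by apply/mapP; exists x => //; rewrite mem_iota.
by apply/mapP; exists s => //; apply: IH.
Qed.

Lemma card_tuple_words L N (P : pred (seq nat)) :
  #|[set t : L.-tuple 'I_N | P (map val t)]| = count P (words L N).
Proof.
rewrite cardsE cardE /enum_mem size_filter -enumT.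
rewrite (eq_count (a2 := preim (fun t : L.-tuple 'I_N => map val (val t)) P)) //.
rewrite -count_map; set vals := map _ (enum _).
have vals_uniq : uniq vals.
  rewrite map_inj_uniq ?enum_uniq // => t1 t2 /= E.
  by apply: val_inj; apply: (inj_map val_inj).
have vals_sub : {subset vals <= words L N}.
  move=> s /mapP[t _ ->]; apply: mem_words; first by rewrite size_map size_tuple.
  by apply/allP => x /mapP[y _ ->]; exact: ltn_ord.
have size_le : size (words L N) <= size vals.
  by rewrite size_words size_map -cardE card_tuple card_ord.
have [size_eq sub_eq] := uniq_min_size vals_uniq vals_sub size_le.
apply/permP; apply: uniq_perm => //.
by rewrite (uniq_size_uniq vals_uniq sub_eq) size_eq.
Qed.

Section BoundedPartitions.
Variable S : pred nat.

Definition allowed (x : nat) : bool := (x == 0) || S x.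

Definition padded_partition (k : nat) (s : seq nat) : bool :=
  [&& sorted geq s, sumn s == k & all allowed s].

Definition npart (L B k : nat) : nat := count (padded_partition k) (words L B.+1).

Lemma p_npart k : p k S = npart k k k.
Proof. exact: (card_tuple_words k k.+1 (padded_partition k)). Qed.

Lemma count_words_bounded L M N (P : pred (seq nat)) : M <= N ->
  count (fun s => all (fun y => y < M) s && P s) (words L N) = count P (words L M).
Proof.
elim: L P => [|L IH] P le_MN //; rewrite !count_wordsS.
rewrite (big_nat_widen _ _ _ _ _ le_MN) big_mkcond [RHS]big_mkcond /=.
apply: eq_bigr => x _; case: (ltnP x M) => Hx /=; first exact: IH.
by rewrite count_pred0.
Qed.

Lemma npart_len0 B k : npart 0 B k = (k == 0).
Proof. by rewrite /npart /= /padded_partition /= eq_sym; case: (k == 0). Qed.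

Lemma padded_partition_cons k x s :
  padded_partition k (x :: s) =
  (allowed x && (x <= k)) && (all (fun y => y < x.+1) s && padded_partition (k - x) s).
Proof.
rewrite /padded_partition /= path_sortedE; last first.
  by move=> a b c /= H1 H2; apply: leq_trans H2 H1.
have -> : all (geq x) s = all (fun y => y < x.+1) s by apply: eq_all.
have -> : (x + sumn s == k) = (x <= k) && (sumn s == k - x).
  case: leqP => Hxk; first by rewrite -{1}(subnKC Hxk) eqn_add2l.
  by apply/negbTE; rewrite neq_ltn (leq_trans Hxk (leq_addr _ _)) orbT.
by case: (all _ s); case: (sorted _ s); case: (x <= k); case: (sumn s == _);
   case: (allowed x).
Qed.

Lemma npartS L B k :
  npart L.+1 B k = \sum_(0 <= x < B.+1 | allowed x && (x <= k)) npart L x (k - x).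
Proof.
rewrite /npart count_wordsS [RHS]big_mkcond /=.
apply: eq_big_nat => x /andP[_ le_xB].
rewrite (eq_count (padded_partition_cons k x)); case: ifP => _.
  by rewrite -(count_words_bounded _ _ le_xB).
by rewrite count_pred0.
Qed.

Lemma npart_bound0 L k : npart L 0 k = (k == 0).
Proof.
elim: L => [|L IH]; first exact: npart_len0.
by rewrite npartS big_mkcond big_nat1 /= subn0.
Qed.

Lemma npart_sum0 L B : npart L B 0 = 1.
Proof.
elim: L B => [|L IH] B; first by rewrite npart_len0.
rewrite npartS big_mkcond big_nat_recl //= IH big1 // => i _.
by rewrite ltn0 andbF.
Qed.

(* A partition of k has at most k nonzero parts: padding beyond length k
   changes nothing. *)
Lemma npart_lenS L B k : k <= L -> npart L.+1 B k = npart L B k.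
Proof.
elim: L B k => [|L IH] B k le_kL.
  by move: le_kL; rewrite leqn0 => /eqP ->; rewrite !npart_sum0.
rewrite npartS [RHS]npartS; apply: eq_bigr => -[|x] /andP[_ le_xk].
  by rewrite !npart_bound0.
by apply: IH; rewrite leq_subLR (leq_trans le_kL) // addSn ltnS leq_addl.
Qed.

Lemma npart_len L B k : k <= L -> npart L B k = npart k B k.
Proof.
move=> /subnKC <-; elim: (L - k) => [|d IH]; first by rewrite addn0.
by rewrite addnS npart_lenS ?leq_addr.
Qed.

Definition pbounded (B k : nat) : nat := npart k B k.

Lemma pbounded0 k : pbounded 0 k = (k == 0).
Proof. exact: npart_bound0. Qed.

(* The classical recursion: either no part equals B+1, or remove one part B+1. *)
Lemma pboundedS B k : pbounded B.+1 k =
  pbounded B k + (if allowed B.+1 && (B.+1 <= k) then pbounded B.+1 (k - B.+1) else 0).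
Proof.
case: k => [|k]; first by rewrite /pbounded !npart_sum0 andbF.
rewrite /pbounded npartS big_mkcond big_nat_recr //= -big_mkcond -npartS.
congr (_ + _); case: ifP => // _.
by apply: npart_len; rewrite subSS leq_subr.
Qed.

(* Parts are at most k anyway. *)
Lemma pbounded_large B k : k <= B -> pbounded B k = p k S.
Proof.
move=> le_kB; rewrite p_npart /pbounded; case: k le_kB => [|k] le_kB.
  by rewrite !npart_len0.
rewrite !npartS (big_nat_widen _ _ _ _ _ (le_kB : k.+2 <= B.+1)).
by apply: eq_bigl => x; rewrite ltnS; case: (x <= k.+1); rewrite /= ?andbF ?andbT.
Qed.

End BoundedPartitions.

Local Open Scope ring_scope.

Definition facprod (R : nzRingType) (r : nat) (b : nat -> bool) : {poly R} :=
  \prod_(i < r) (if b i then 1 - 'X^(i.+1) else 1).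

Lemma eq_facprod (R : nzRingType) r b b' :
  (forall i, (i < r)%N -> b i = b' i) -> facprod R r b = facprod R r b'.
Proof. by move=> eq_b; apply: eq_bigr => i _; rewrite eq_b. Qed.

Lemma facprod_ext (R : nzRingType) r b t :
  facprod R r.+1 (fun i => if i == r then t else b i) =
  facprod R r b * (if t then 1 - 'X^(r.+1) else 1).
Proof.
rewrite /facprod big_ord_recr /= eqxx; congr (_ * _).
by apply: eq_bigr => i _; rewrite ltn_eqF.
Qed.

(* conv a f k: the k-th coefficient of (Σ_j f j X^j)·a, which only involves
   f 0, ..., f k; it expresses products with formal power series. *)
Definition conv (R : nzRingType) (a : {poly R}) (f : nat -> R) (k : nat) : R :=
  \sum_(j < k.+1) f j * a`_(k - j).

Section Convolution.
Variable R : comNzRingType.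
Implicit Types (a b : {poly R}) (f : nat -> R).

Lemma convE a f k K : (k < K)%N -> ((\poly_(i < K) f i) * a)`_k = conv a f k.
Proof.
move=> lt_kK; rewrite coefM; apply: eq_bigr => j _; rewrite coef_poly.
by rewrite (leq_ltn_trans (leq_ord j) lt_kK).
Qed.

Lemma eq_conv a f g k : f =1 g -> conv a f k = conv a g k.
Proof. by move=> eq_fg; apply: eq_bigr => j _; rewrite eq_fg. Qed.

(* Associativity of the product of a power series by two polynomials. *)
Lemma convM a b f k : conv (a * b) f k = conv a (conv b f) k.
Proof.
have low_coefs (A B : {poly R}) : (forall j, (j <= k)%N -> A`_j = B`_j) ->
    (A * a)`_k = (B * a)`_k.
  by move=> eqAB; rewrite !coefM; apply: eq_bigr => j _; rewrite eqAB // leq_ord.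
rewrite -(convE _ _ (ltnSn k)) -(convE _ _ (ltnSn k)) (mulrC a) mulrA.
apply: low_coefs => j le_jk; rewrite coef_poly ltnS le_jk.
by rewrite convE // ltnS.
Qed.

Lemma conv1 f k : conv 1 f k = f k.
Proof. by rewrite -(convE _ _ (ltnSn k)) mulr1 coef_poly ltnSn. Qed.

Lemma conv_factor (t : bool) s f k :
  conv (if t then 1 - 'X^s else 1) f k =
  f k - (if t && (s <= k)%N then f (k - s)%N else 0).
Proof.
case: t => /=; last by rewrite conv1 subr0.
rewrite -(convE _ _ (ltnSn k)) mulrBr mulr1 coefB coefMXn !coef_poly ltnSn.
by case: leqP => // le_sk; rewrite ltnS leq_subr.
Qed.

Lemma conv_delta a k : conv a (fun j => (j == 0)%:R) k = a`_k.
Proof.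
rewrite /conv big_ord_recl /= mul1r subn0 big1 ?addr0 // => i _.
by rewrite mul0r.
Qed.

End Convolution.

Lemma size_factor (R : idomainType) (t : bool) r :
  size (if t then 1 - 'X^(r.+1) else 1 : {poly R}) = (if t then r.+2 else 1)%N.
Proof.
case: t; last by rewrite size_poly1.
by rewrite -opprB size_polyN -polyC1 size_XnsubC.
Qed.

Lemma size_facprod (R : idomainType) r b :
  size (facprod R r b) = (\sum_(i < r | b i) i.+1).+1%N.
Proof.
elim: r => [|r IH]; first by rewrite /facprod !big_ord0 size_poly1.
rewrite /facprod big_ord_recr /= -/(facprod R r b) [in RHS]big_mkcond big_ord_recr /=.
rewrite -big_mkcond size_mul ?IH ?size_factor.
- by case: (b r); rewrite /= ?addn1 ?addn0 // addnS.
- by rewrite -size_poly_eq0 IH.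
by rewrite -size_poly_eq0 size_factor; case: (b r).
Qed.

Lemma facprod_coef0 (R : nzRingType) r b : (facprod R r b)`_0 = 1.
Proof.
elim: r => [|r IH]; first by rewrite /facprod big_ord0 coef1.
rewrite /facprod big_ord_recr /= -/(facprod R r b) coef0M IH mul1r.
by case: (b r); rewrite ?coefB coef1 ?coefXn ?subr0.
Qed.

Lemma map_facprod (R S : nzRingType) (f : {rmorphism R -> S}) r b :
  map_poly f (facprod R r b) = facprod S r b.
Proof.
rewrite /facprod rmorph_prod; apply: eq_bigr => i _.
by case: (b i); rewrite ?rmorphB ?rmorph1 ?rmorphXn /= ?map_polyX.
Qed.

Section GeneratingFunction.
Variables (m : nat) (S : {set 'I_m}).
Local Notation Sn := (natset S).

Lemma allowed_in (i : 'I_m) : allowed Sn i.+1 = (i \in S).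
Proof.
rewrite /allowed /natset /=; apply/existsP/idP => [[j /andP[jS /eqP [E]]]|iS].
  by have -> : i = j by apply: val_inj.
by exists i; rewrite iS eqxx.
Qed.

Lemma allowed_out i : (m <= i)%N -> allowed Sn i.+1 = false.
Proof.
move=> le_mi; rewrite /allowed /natset /=; apply/existsP => -[j /andP[_ /eqP [E]]].
by have := ltn_ord j; rewrite -E ltnNge le_mi.
Qed.

Lemma pbounded_gf (R : comNzRingType) B k :
  conv (facprod R B (fun i => allowed Sn i.+1)) (fun j => (pbounded Sn B j)%:R) k =
  (k == 0)%:R.
Proof.
elim: B k => [|B IH] k; first by rewrite /facprod big_ord0 conv1 pbounded0.
rewrite /facprod big_ord_recr /= convM -/(facprod R B _) -IH; apply: eq_conv => j.
rewrite conv_factor pboundedS natrD.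
by case: ifP => _; rewrite ?addr0 ?subr0 ?addrK.
Qed.

(* Only parts in [1, m] are allowed, so bounding the parts by m is harmless. *)
Lemma p_pbounded k : p k Sn = pbounded Sn m k.
Proof.
have stable d : pbounded Sn (m + d) k = pbounded Sn m k.
  elim: d => [|d IH]; first by rewrite addn0.
  by rewrite addnS pboundedS allowed_out ?leq_addr // addn0 IH.
case: (leqP k m) => [le_km|lt_mk]; first by rewrite pbounded_large.
by rewrite -(pbounded_large _ (leqnn k)) -{1}(subnKC (ltnW lt_mk)) stable.
Qed.

Lemma cpoly_split :
  cpoly m = facprod int m (fun i => ~~ allowed Sn i.+1) *
            facprod int m (fun i => allowed Sn i.+1).
Proof.
rewrite /cpoly /facprod -big_split; apply: eq_bigr => i _ /=.
by case: (allowed Sn i.+1); rewrite ?mul1r ?mulr1.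
Qed.

Lemma cpoly_conv_p k :
  conv (cpoly m) (fun j => (p j Sn)%:Z) k =
  (facprod int m (fun i => ~~ allowed Sn i.+1))`_k.
Proof.
rewrite cpoly_split convM -conv_delta; apply: eq_conv => j.
rewrite -(pbounded_gf int m j); apply: eq_conv => i.
by rewrite p_pbounded natz.
Qed.

End GeneratingFunction.

(* tri m = 1 + 2 + ... + m, the degree of cpoly m. *)
Definition tri (m : nat) : nat := (\sum_(i < m) i.+1)%N.

Lemma triE m : ((m * m.+1) %/ 2)%N = tri m.
Proof.
rewrite /tri divn2 mulnC -[m in (m.+1 * m)%N]/(m.+1.-1) -bin2 -bin2_sum.
by rewrite big_nat_recl // big_mkord add0n.
Qed.

Lemma cpoly_facprod m : cpoly m = facprod int m (fun _ => true).
Proof. by []. Qed.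

(* Omitting at least one factor drops the degree below tri m. *)
Lemma sum_factors_lt m (b : nat -> bool) (i0 : 'I_m) : ~~ b i0 ->
  (\sum_(i < m | b i) i.+1 < tri m)%N.
Proof.
move=> b_i0; rewrite /tri [X in (_ < X)%N](bigID (fun i : 'I_m => b i)) /=.
by rewrite -[X in (X < _)%N]addn0 ltn_add2l (bigD1 i0) //= addSn.
Qed.

Lemma size_cofactor m (S : {set 'I_m}) : S != set0 ->
  (size (facprod int m (fun i => ~~ allowed (natset S) i.+1)) <= tri m)%N.
Proof.
case/set0Pn=> i0 i0S; rewrite size_facprod.
apply: (@sum_factors_lt m (fun i => ~~ allowed (natset S) i.+1) i0).
by rewrite negbK allowed_in.
Qed.

(* The recurrence: for k >= tri m the k-th coefficient of cpoly · P_S vanishes. *)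
Lemma p_recurrence m (S : {set 'I_m}) k : (tri m <= k)%N -> S != set0 ->
  (p k (natset S))%:Z =
    - \sum_((k - tri m)%N <= j < k) (cpoly m)`_(k - j) * (p j (natset S))%:Z.
Proof.
move=> le_nk S0; have := cpoly_conv_p S k.
rewrite nth_default; last exact: leq_trans (size_cofactor S0) le_nk.
rewrite /conv -(big_mkord xpredT (fun j => (p j (natset S))%:Z * (cpoly m)`_(k - j))).
rewrite big_nat_recr //= subnn cpoly_facprod facprod_coef0 mulr1 -cpoly_facprod.
rewrite (@big_cat_nat _ _ _ (k - tri m)%N 0 k _ _ (leq0n _) (leq_subr _ _)) /=.
rewrite big_nat_cond big1 ?add0r; last first.
  move=> j /andP[/andP[_ lt_j] _]; rewrite nth_default ?mulr0 //.
  by rewrite cpoly_facprod size_facprod; move: lt_j; rewrite !ltn_subRL addnC.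
move/eqP; rewrite addrC addr_eq0 => /eqP ->; congr (- _).
by apply: eq_bigr => j _; rewrite mulrC.
Qed.

Definition prow (m k : nat) : 'rV[rat]_#|nesubsets m| :=
  \row_j (p k (natset (enum_val j)))%:R.

Lemma row_Pmat m N (i : 'I_N) : row i (Pmat m N) = prow m i.
Proof. by apply/rowP => j; rewrite !mxE. Qed.

Lemma enum_val_neq0 m (j : 'I_#|nesubsets m|) : enum_val j != set0.
Proof. by have := enum_valP j; rewrite inE. Qed.

Lemma prow_recurrence m k : (tri m <= k)%N ->
  prow m k = - \sum_((k - tri m)%N <= j < k) ((cpoly m)`_(k - j))%:~R *: prow m j.
Proof.
move=> le_nk; apply/rowP => j; rewrite !mxE summxE.
have := congr1 (fun z : int => (z%:~R : rat)) (p_recurrence le_nk (enum_val_neq0 j)).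
rewrite /= rmorphN rmorph_sum /= pmulrn => ->; congr (- _).
by apply: eq_bigr => i _; rewrite rmorphM !mxE.
Qed.

Lemma prow_sub m k : (prow m k <= Pmat m (tri m))%MS.
Proof.
elim/ltn_ind: k => k IH; case: (ltnP k (tri m)) => [lt_kn | le_nk].
  by rewrite -(row_Pmat m (Ordinal lt_kn)) row_sub.
rewrite prow_recurrence // eqmx_opp big_nat_cond.
apply: summx_sub => j /andP[/andP[_ lt_jk] _].
by apply: scalemx_sub; apply: IH.
Qed.

Lemma rank_Pmat_le m N : (\rank (Pmat m N) <= tri m)%N.
Proof.
have sub : (Pmat m N <= Pmat m (tri m))%MS.
  by apply/row_subP => i; rewrite row_Pmat prow_sub.
exact: leq_trans (mxrankS sub) (rank_leq_row _).
Qed.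

Lemma tri_ge r : (r <= tri r)%N.
Proof. by rewrite -[X in (X <= _)%N]card_ord -sum1_card; apply: leq_sum. Qed.

Lemma functional_top_monomial (F : fieldType) (phi : {poly F} -> F) (W : {poly F}) d :
  {morph phi : P Q / P + Q} -> (forall a P, phi (a *: P) = a * phi P) ->
  (forall e, (e < d)%N -> phi 'X^e = 0) -> size W = d.+1 -> phi W = 0 ->
  phi 'X^d = 0.
Proof.
move=> phiD phiZ phi_low sizeW.
have phi0 : phi 0 = 0 by rewrite -(scale0r 0) phiZ mul0r.
have lcW : W`_d != 0.
  by rewrite -[d]/(d.+1.-1) -sizeW -lead_coefE lead_coef_eq0 -size_poly_eq0 sizeW.
rewrite -(coefK W) poly_def (big_morph phi phiD phi0) sizeW big_ord_recr /=.
rewrite big1 ?add0r ?phiZ; last by move=> i _; rewrite phiZ phi_low ?mulr0.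
by move/eqP; rewrite mulf_eq0 (negbTE lcW) => /eqP.
Qed.

(* The products ∏_{i∈T}(1 - X^i), T a proper subset of [1,r], span the
   polynomials of degree < tri r: a linear functional killing all of them
   kills every X^d with d < tri r.  Splitting T by whether r+1 ∈ T gives the
   induction on r. *)
Lemma facprod_span (F : fieldType) r (phi : {poly F} -> F) :
  {morph phi : P Q / P + Q} -> (forall a P, phi (a *: P) = a * phi P) ->
  (forall b, (exists2 i, (i < r)%N & ~~ b i) -> phi (facprod F r b) = 0) ->
  forall d, (d < tri r)%N -> phi 'X^d = 0.
Proof.
elim: r phi => [|r IH] phi phiD phiZ phi_proper d; first by rewrite /tri big_ord0.
have phi_low e : (e < tri r)%N -> phi 'X^e = 0.
  apply: IH => // b [i lt_ir b_i].
  have := phi_proper (fun j => if j == r then false else b j).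
  rewrite facprod_ext mulr1; apply; exists i; first exact: ltnW.
  by rewrite ltn_eqF.
have phi_shift e : (e < tri r)%N -> phi ('X^e * (1 - 'X^(r.+1))) = 0.
  apply: (IH (fun P => phi (P * (1 - 'X^(r.+1))))).
  - by move=> P Q; rewrite mulrDl phiD.
  - by move=> a P; rewrite -scalerAl phiZ.
  move=> b [i lt_ir b_i].
  have := phi_proper (fun j => if j == r then true else b j).
  rewrite facprod_ext; apply; exists i; first exact: ltnW.
  by rewrite ltn_eqF.
have phi_top : phi 'X^(tri r) = 0.
  apply: (@functional_top_monomial F phi (facprod F r xpredT)) => //.
    by rewrite size_facprod.
  have := phi_proper (fun j => if j == r then false else xpredT j).
  by rewrite facprod_ext mulr1; apply; exists r; rewrite ?eqxx.
rewrite /tri big_ord_recr /= -/(tri r) => lt_d.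
case: (ltngtP d (tri r)) => [|lt_nd|->]; [exact: phi_low | | exact: phi_top].
have le_rd : (r.+1 <= d)%N := leq_ltn_trans (tri_ge r) lt_nd.
have lt_e : (d - r.+1 < tri r)%N by rewrite ltn_subLR // addnC.
have := phi_shift _ lt_e; rewrite mulrBr mulr1 -exprD subnK //.
rewrite -scaleN1r phiD phiZ (phi_low _ lt_e) mulN1r add0r => /eqP.
by rewrite oppr_eq0 => /eqP.
Qed.

Definition cmat (m : nat) : 'M[rat]_(tri m) :=
  \matrix_(i, k) (if (k <= i)%N then ((cpoly m)`_(i - k))%:~R else 0).

Lemma cmat_Pmat m i j :
  (cmat m *m Pmat m (tri m)) i j =
  (facprod rat m (fun t => ~~ allowed (natset (enum_val j)) t.+1))`_i.
Proof.
rewrite -(map_facprod intr) coef_map /= -cpoly_conv_p /conv !mxE.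
rewrite (big_ord_widen _ (fun k => (p k (natset (enum_val j)))%:Z * (cpoly m)`_(i - k))
           (ltn_ord i : (i.+1 <= tri m)%N)).
rewrite rmorph_sum /= [RHS]big_mkcond /=; apply: eq_bigr => k _; rewrite !mxE ltnS.
by case: (k <= i)%N; rewrite ?mul0r // rmorphM /= mulrC pmulrn.
Qed.

(* The columns of cmat · P run through the ∏_{i∈T}(1 - X^i), T ⊊ [1,m], which
   span the polynomials of degree < tri m: so its rows are independent. *)
Lemma cmat_Pmat_row_free m : row_free (cmat m *m Pmat m (tri m)).
Proof.
apply: inj_row_free => v v_ker.
pose phi (P : {poly rat}) := \sum_(i < tri m) v 0 i * P`_i.
have phiD : {morph phi : P Q / P + Q}.
  by move=> P Q; rewrite /phi -big_split; apply: eq_bigr => i _; rewrite coefD mulrDr.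
have phiZ a P : phi (a *: P) = a * phi P.
  by rewrite /phi mulr_sumr; apply: eq_bigr => i _; rewrite coefZ mulrCA.
have phi_proper b : (exists2 i, (i < m)%N & ~~ b i) -> phi (facprod rat m b) = 0.
  case=> i0 lt_i0m b_i0; pose S := [set i : 'I_m | ~~ b i].
  have S_ne : S \in nesubsets m.
    by rewrite inE; apply/set0Pn; exists (Ordinal lt_i0m); rewrite inE.
  have jE : enum_val (enum_rank_in S_ne S) = S := enum_rankK_in S_ne S_ne.
  have bE : facprod rat m (fun t => ~~ allowed (natset S) t.+1) = facprod rat m b.
    by apply: eq_facprod => t lt_tm; rewrite (allowed_in S (Ordinal lt_tm)) inE negbK.
  have := congr1 (fun A : 'rV_#|nesubsets m| => A 0 (enum_rank_in S_ne S)) v_ker.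
  by rewrite !mxE => <-; apply: eq_bigr => i _; rewrite cmat_Pmat jE bE.
apply/rowP => i; rewrite mxE; have := facprod_span phiD phiZ phi_proper (ltn_ord i).
rewrite /phi (bigD1 i) //= coefXn eqxx mulr1 big1 ?addr0 // => k ne_ki.
by rewrite coefXn (_ : (k == i :> nat) = false) ?mulr0 //; exact: negbTE.
Qed.

Lemma rank_Pmat_tri m : \rank (Pmat m (tri m)) = tri m.
Proof.
apply/eqP; rewrite eqn_leq rank_leq_row /=.
have := mxrankM_maxr (cmat m) (Pmat m (tri m)).
by rewrite (eqP (cmat_Pmat_row_free m)).
Qed.

Local Close Scope ring_scope.

Theorem theoremA (m : nat) (hm : (0 < m)%N) :
  let n := (m * m.+1) %/ 2 in
  let c := fun i : nat => ((cpoly m)`_i)%R in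
  ((forall N : nat, (\rank (Pmat m N) <= n)%N) /\
   (exists N : nat, \rank (Pmat m N) = n)) /\
  (forall (k : nat) (S : {set 'I_m}), (n <= k)%N -> S != set0 ->
     ((p k (natset S))%:Z =
      - \sum_((k - n)%N <= j < k) c (k - j)%N * (p j (natset S))%:Z)%R).
Proof.
move=> n c; rewrite /n triE.
split; [split|].
- exact: rank_Pmat_le.
- by exists (tri m); exact: rank_Pmat_tri.
- by move=> k S le_nk S_ne; exact: p_recurrence.
Qed.
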